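(* Let $I$ be a compact Hausdorff space and $f_i:\mathbb{R}^m\to\mathbb{R}$, $i\in I$, convex functions such that $i\mapsto f_i(x)$ is continuous on $I$ for each $x$; set $F(i,x):=f_i(x)$, $f(x):=\max_{i\in I}f_i(x)$, $I_f(x):=\{i\in I: f_i(x)=f(x)\}$. Let $\bar x\in\mathbb{R}^m$ with $f(\bar x)=0$. Then the following are equivalent: (i) $\min_{\|h\|=1}f'(\bar x,h)\neq0$; (ii) there exist constants $c,\varepsilon>0$ such that whenever $G\in C(I\times\mathbb{R}^m,\mathbb{R})$ is such that each $g_i:=G(i,\cdot)$ is convex, and, with $g(x):=\max_{i\in I}g_i(x)$ and $I_g(x):=\{i\in I:g_i(x)=g(x)\}$, one has: $g(\bar x)=0$; $I_g(\bar x)\subseteq I_f(\bar x)$ if $\min_{\|h\|=1}f'(\bar x,h)<0$; $I_f(\bar x)\subseteq I_g(\bar x)$ if $\min_{\|h\|=1}f'(\bar x,h)>0$; and $$\limsup_{x\to\bar x}\frac{|f_i(x)-g_i(x)-(f_i(\bar x)-g_i(\bar x))|}{\|x-\bar x\|}\le\varepsilon\quad\text{for all } i\in I_f(\bar x)\cap I_g(\bar x),$$ then $\tau_{\min}(G,\bar x)\le c$; (iii) there exist constants $c,\varepsilon>0$ such that for all $u^*\in\mathbb{R}^m$ with $\|u^*\|\le1$, one has $\tau_{\min}(G,\bar x)\le c$, where $G\in C(I\times\mathbb{R}^m,\mathbb{R})$ is defined by $G(i,x):=f_i(x)+\varepsilon\langle u^*,x-\bar x\rangle$.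
   Context: $\mathbb{R}^m$ carries the Euclidean norm, $B(\bar x,\delta)$ is the closed ball of radius $\delta$ around $\bar x$, $d(x,D)=\inf\{\|x-y\|:y\in D\}$ (with $\inf\emptyset=+\infty$). For a convex $\varphi$, $\varphi'(x,h):=\lim_{t\to0^+}\frac{\varphi(x+th)-\varphi(x)}{t}$. For $G\in C(I\times\mathbb{R}^m,\mathbb{R})$ with $g_i:=G(i,\cdot)$ convex and $g:=\max_{i\in I}g_i$, the solution set is $S_G:=\{x: g_i(x)\le0\ \forall i\in I\}$ and the local error bound modulus at $\bar x$ is $\tau_{\min}(G,\bar x):=\inf\{\tau>0:\exists\delta>0\text{ with } d(x,S_G)\le\tau[g(x)]_+\ \forall x\in B(\bar x,\delta)\}$, where $[t]_+=\max\{t,0\}$ and $\inf\emptyset=+\infty$. *)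

From HB Require Import structures.
From mathcomp Require Import all_boot all_order all_algebra.
From mathcomp Require Import all_classical all_reals all_analysis.
Set Implicit Arguments. Unset Strict Implicit. Unset Printing Implicit Defensive.
Import Order.TTheory GRing.Theory Num.Theory.
Import numFieldNormedType.Exports.
Local Open Scope classical_set_scope.
Local Open Scope ring_scope.

Section Defs.
Variables (R : realType) (m : nat).
Local Notation V := 'rV[R]_m.

Definition enorm (x : V) : R := Num.sqrt (\sum_(j < m) x ord0 j ^+ 2).
Definition inner (u x : V) : R := \sum_(j < m) u ord0 j * x ord0 j.

Definition convex_fun (phi : V -> R) : Prop :=
  forall (x y : V) (t : R), 0 <= t <= 1 ->
    phi (t *: x + (1 - t) *: y) <= t * phi x + (1 - t) * phi y.

Definition dir_deriv (phi : V -> R) (x h : V) : R :=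
  lim ((fun t : R => (phi (x + t *: h) - phi x) / t) @ 0^'+).

Definition min_dir_deriv (phi : V -> R) (x : V) : R :=
  inf [set dir_deriv phi x h | h in [set h : V | enorm h = 1]].

Variable I : Type.

Definition fmax (G : I -> V -> R) (x : V) : R := sup [set G i x | i in [set: I]].

Definition active (G : I -> V -> R) (x : V) : set I :=
  [set i | G i x = fmax G x].

Definition solset (G : I -> V -> R) : set V := [set x | forall i, G i x <= 0].

(* distance to a set, inf of empty set = +oo *)
Definition edist (x : V) (D : set V) : \bar R :=
  ereal_inf [set (enorm (x - y))%:E | y in D].

Definition tau_min (G : I -> V -> R) (xb : V) : \bar R :=
  ereal_inf [set tau%:E | tau in [set tau : R | 0 < tau /\
     exists delta : R, 0 < delta /\
       forall x : V, enorm (x - xb) <= delta ->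
         (edist x (solset G) <= (tau * Num.max (fmax G x) 0)%:E)%E]].

End Defs.

(* Write f := max_i F i and g := max_i G i, and let mu be the minimal directional
   derivative of f at xb over unit directions.
   If mu < 0, a unit direction h with f'(xb; h) < 0 is a descent direction for every F i;
   first-order closeness carries it over to the active G i, the inactive G i are
   negative at xb anyway, and compactness of I turns this into a uniform Slater point
   y = xb + s h of G, whence d(x, S_G) <= |x - y| g(x) / q (Robinson's estimate).
   If mu > 0, f grows like mu |x - xb|; by compactness each ray from xb carries an
   active index i along which F i keeps half of this growth, closeness passes it to
   G i, and since xb is in S_G we get d(x, S_G) <= |x - xb| <= 4 g(x) / mu.
   Tilting F by eps <u, x - xb> is an admissible perturbation: a convex family with
   continuous dependence on a compact index set is locally equi-Lipschitz, hence
   jointly continuous.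
   If mu = 0, f >= 0 everywhere; tilting along a unit h with f'(xb; h) small confines
   S_G to the half-space <h, y - xb> <= 0 while g stays small on the ray xb + s h,
   which forces the error-bound modulus to be large. *)

From Pilot Require Import Defs.
From HB Require Import structures.
From mathcomp Require Import all_boot all_order all_algebra.
From mathcomp Require Import all_classical all_reals all_analysis.
From mathcomp Require Import ring lra.
Import Order.TTheory GRing.Theory Num.Theory.
Import numFieldNormedType.Exports.
Local Open Scope classical_set_scope.
Local Open Scope ring_scope.
Set Implicit Arguments. Unset Strict Implicit. Unset Printing Implicit Defensive.

Section Euclid.
Variables (R : realType) (m : nat).
Local Notation V := 'rV[R]_m.
Implicit Types (x y u v : V) (a : R).

Lemma enorm_ge0 x : 0 <= enorm x.
Proof. exact: sqrtr_ge0. Qed.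

Lemma inner_self x : inner x x = enorm x ^+ 2.
Proof.
rewrite /enorm sqr_sqrtr; last by apply: sumr_ge0 => j _; exact: sqr_ge0.
by apply: eq_bigr => j _; rewrite expr2.
Qed.

Lemma innerC u v : inner u v = inner v u.
Proof. by apply: eq_bigr => j _; rewrite mulrC. Qed.

Lemma innerDr u x y : inner u (x + y) = inner u x + inner u y.
Proof. by rewrite /inner -big_split; apply: eq_bigr => j _; rewrite mxE mulrDr. Qed.

Lemma innerZr u a x : inner u (a *: x) = a * inner u x.
Proof. by rewrite /inner mulr_sumr; apply: eq_bigr => j _; rewrite mxE mulrCA. Qed.

Lemma innerBr u x y : inner u (x - y) = inner u x - inner u y.
Proof. by rewrite innerDr -scaleN1r innerZr mulN1r. Qed.

Lemma inner0r u : inner u 0 = 0.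
Proof. by rewrite -(scale0r 0) innerZr mul0r. Qed.

Lemma innerDl u x y : inner (x + y) u = inner x u + inner y u.
Proof. by rewrite innerC innerDr !(innerC u). Qed.

Lemma innerZl u a x : inner (a *: x) u = a * inner x u.
Proof. by rewrite innerC innerZr innerC. Qed.

Lemma innerBl u x y : inner (x - y) u = inner x u - inner y u.
Proof. by rewrite innerC innerBr !(innerC u). Qed.

Lemma enorm_eq0 x : enorm x = 0 -> x = 0.
Proof.
move=> /eqP; rewrite -sqrf_eq0 -inner_self psumr_eq0 => [/allP x0|j _]; last first.
  by rewrite -expr2 sqr_ge0.
apply/rowP => j; rewrite mxE; apply/eqP.
by have := x0 j (mem_index_enum _); rewrite mulf_eq0 orbb.
Qed.

Lemma enorm_gt0 x : x != 0 -> 0 < enorm x.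
Proof.
by move=> x0; rewrite lt_def enorm_ge0 andbT; apply: contra x0 => /eqP/enorm_eq0->.
Qed.

Lemma enormZ a x : enorm (a *: x) = `|a| * enorm x.
Proof.
rewrite /enorm -sqrtr_sqr -sqrtrM ?sqr_ge0 // mulr_sumr; congr Num.sqrt.
by apply: eq_bigr => j _; rewrite mxE exprMn.
Qed.

Lemma enorm0 : enorm (0 : V) = 0.
Proof. by rewrite -(scale0r 0) enormZ normr0 mul0r. Qed.

Lemma ler_norm_inner u v : `|inner u v| <= enorm u * enorm v.
Proof.
have [->|v0] := eqVneq v 0; first by rewrite inner0r enorm0 normr0 mulr0.
have nv_gt0 : 0 < enorm v ^+ 2 by rewrite exprn_gt0 // enorm_gt0.
suff : inner u v ^+ 2 <= enorm u ^+ 2 * enorm v ^+ 2.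
  by rewrite -exprMn -real_normK ?num_real // ler_pXn2r ?nnegrE ?mulr_ge0 ?enorm_ge0.
have := inner_self (enorm v ^+ 2 *: u - inner u v *: v).
rewrite !(innerBl, innerBr, innerZl, innerZr) !inner_self [inner v u]innerC.
have -> : enorm v ^+ 2 * (enorm v ^+ 2 * enorm u ^+ 2 - inner u v * inner u v)
    - inner u v * (enorm v ^+ 2 * inner u v - inner u v * enorm v ^+ 2)
  = enorm v ^+ 2 * (enorm u ^+ 2 * enorm v ^+ 2 - inner u v ^+ 2) by ring.
move=> /(congr1 (fun r => 0 <= r)); rewrite exprn_ge0 ?enorm_ge0 // pmulr_rge0 //.
by rewrite subr_ge0 => ->.
Qed.

Lemma ler_enormD x y : enorm (x + y) <= enorm x + enorm y.
Proof.
rewrite -(@ler_pXn2r _ 2) ?nnegrE ?addr_ge0 ?enorm_ge0 // -!inner_self.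
rewrite innerDl !innerDr [inner y x]innerC !inner_self sqrrD.
by have := ler_norm (inner x y); have := ler_norm_inner x y; lra.
Qed.

Lemma mxnorm_le_enorm x : `|x| <= enorm x.
Proof.
rewrite (_ : `|x| = mx_norm x) // mx_normrE.
apply: bigmax_le => [|[i j] _]; first exact: enorm_ge0.
rewrite [i]ord1 -(@ler_pXn2r _ 2) ?nnegrE ?enorm_ge0 // real_normK ?num_real //.
rewrite -inner_self /inner (bigD1 j) //= -expr2 lerDl.
by apply: sumr_ge0 => k _; rewrite -expr2 sqr_ge0.
Qed.

Lemma ler_coord_mxnorm x j : `|x ord0 j| <= `|x|.
Proof.
by rewrite (_ : `|x| = mx_norm x) // mx_normrE; apply/bigmax_geP; right; exists (ord0, j).
Qed.

Lemma l1_le_mxnorm x : \sum_(j < m) `|x ord0 j| <= m%:R * `|x|.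
Proof.
apply: le_trans (ler_sum _ (fun j _ => ler_coord_mxnorm x j)) _.
by rewrite sumr_const card_ord mulr_natl.
Qed.

Lemma ler_inner_mxnorm u x : `|inner u x| <= (\sum_(j < m) `|u ord0 j|) * `|x|.
Proof.
rewrite mulr_suml; apply: le_trans (ler_norm_sum _ _ _) _; apply: ler_sum => j _.
by rewrite normrM ler_wpM2l ?ler_coord_mxnorm.
Qed.

Lemma enorm_delta (k : 'I_m) : enorm ('e_k : V) = 1.
Proof.
rewrite /enorm (bigD1 k) //= big1 ?addr0 => [|j jk].
  by rewrite mxE !eqxx expr1n sqrtr1.
by rewrite mxE eqxx (negbTE jk) expr0n.
Qed.

Lemma enorm_normalize v : v != 0 ->
  [/\ 0 < enorm v, enorm ((enorm v)^-1 *: v) = 1 & v = enorm v *: ((enorm v)^-1 *: v)].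
Proof.
move=> v0; have nv := enorm_gt0 v0; split => //.
  by rewrite enormZ normfV gtr0_norm // mulVf // gt_eqF.
by rewrite scalerA mulfV ?scale1r // gt_eqF.
Qed.

End Euclid.

Section ConvexFun.
Variables (R : realType) (m : nat) (phi : 'rV[R]_m -> R).
Local Notation V := 'rV[R]_m.
Hypothesis phi_cvx : convex_fun phi.
Implicit Types (x y h w e : V) (s t r B tau kappa : R).

Lemma convex_sublevel x y B t : 0 <= t <= 1 -> phi x <= B -> phi y <= B ->
  phi (t *: x + (1 - t) *: y) <= B.
Proof.
move=> /[dup] t01 /andP[t0 t1] hx hy; apply: le_trans (phi_cvx x y t01) _.
have := ler_wpM2l t0 hx; have := ler_wpM2l (ltac:(lra) : 0 <= 1 - t) hy; lra.
Qed.

Lemma convex_ray x h s t : 0 < s -> s <= t ->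
  phi (x + s *: h) <= (1 - s / t) * phi x + s / t * phi (x + t *: h).
Proof.
move=> s0 st; have t0 : 0 < t := lt_le_trans s0 st.
have st01 : 0 <= s / t <= 1.
  by apply/andP; split; [rewrite divr_ge0 // ltW | rewrite ler_pdivrMr // mul1r].
have -> : x + s *: h = s / t *: (x + t *: h) + (1 - s / t) *: x.
  by apply/rowP => j; rewrite !mxE; field; rewrite gt_eqF.
by rewrite [leRHS]addrC; exact: phi_cvx.
Qed.

Lemma convex_ray_nonpos x h s t : phi x <= 0 -> 0 < s -> s <= t ->
  phi (x + s *: h) <= s / t * phi (x + t *: h).
Proof.
move=> px s0 st; have t0 : 0 < t := lt_le_trans s0 st.
have : s / t <= 1 by rewrite ler_pdivrMr // mul1r.
have := convex_ray x h s0 st; nra.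
Qed.

Lemma convex_ray_neg x h kappa : phi x < 0 ->
  exists2 s, 0 < s & phi (x + s *: h) < kappa * s.
Proof.
move=> px; set D := `|phi (x + h) - phi x - kappa| + 1.
have D0 : 0 < D by rewrite ltr_pwDr.
set s := Num.min 1 (- phi x / (2 * D)).
have s0 : 0 < s by rewrite lt_min ltr01 divr_gt0 ?mulr_gt0 // oppr_gt0.
have s1 : s <= 1 by rewrite ge_min lexx.
have sD : s * D <= - phi x / 2.
  have : s <= - phi x / (2 * D) by rewrite ge_min lexx orbT.
  by rewrite invfM mulrA ler_pdivlMr.
exists s => //; have := convex_ray x h s0 s1; rewrite divr1 scale1r.
have : s * (phi (x + h) - phi x - kappa) <= s * D.
  by apply: ler_wpM2l; [exact: ltW | apply: le_trans (ler_norm _) _; rewrite lerDl].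
nra.
Qed.

Definition dquot x h t := (phi (x + t *: h) - phi x) / t.

Lemma dquot_le x h s t : 0 < s -> s <= t -> dquot x h s <= dquot x h t.
Proof.
move=> s0 st; rewrite /dquot ler_pdivrMr //.
have -> : (phi (x + t *: h) - phi x) / t * s = s / t * (phi (x + t *: h) - phi x) by ring.
by have := convex_ray x h s0 st; lra.
Qed.

Lemma dquot_ge x h t : 0 < t -> phi x - phi (x - h) <= dquot x h t.
Proof.
move=> t0; have t1 : 0 < 1 + t by rewrite addr_gt0.
have := convex_ray (x - h) h ltr01 (ltW (ltr_pwDr t0 (lexx 1))).
have -> : x - h + 1 *: h = x by rewrite scale1r subrK.
have -> : x - h + (1 + t) *: h = x + t *: h by rewrite scalerDl scale1r addrA subrK.
move=> /(ler_wpM2l (ltW t1)).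
have -> : (1 + t) * ((1 - 1 / (1 + t)) * phi (x - h) + 1 / (1 + t) * phi (x + t *: h))
    = t * phi (x - h) + phi (x + t *: h) by field; rewrite gt_eqF.
by rewrite /dquot ler_pdivlMr //; lra.
Qed.

Lemma has_lbound_dquot x h : has_lbound [set dquot x h t | t in `]0, +oo[].
Proof.
exists (phi x - phi (x - h)) => _ [t /= t0 <-].
by apply: dquot_ge; move: t0; rewrite in_itv /= andbT.
Qed.

Lemma dir_derivE x h : dir_deriv phi x h = inf [set dquot x h t | t in `]0, +oo[].
Proof.
apply: cvg_lim => //; apply: nondecreasing_at_right_cvgr => //; last first.
  exact: has_lbound_dquot.
by move=> s t; rewrite !in_itv /= !andbT => s0 _; exact: dquot_le.
Qed.

Lemma dir_deriv_ge x h : phi x - phi (x - h) <= dir_deriv phi x h.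
Proof.
rewrite dir_derivE; apply: lb_le_inf.
  by exists (dquot x h 1), 1 => //=; rewrite in_itv /= ltr01.
by move=> _ [t /= t0 <-]; apply: dquot_ge; move: t0; rewrite in_itv /= andbT.
Qed.

Lemma dir_deriv_ge_ray x h a s : a <= dir_deriv phi x h -> 0 < s ->
  phi x + a * s <= phi (x + s *: h).
Proof.
move=> ad s0; have : a <= dquot x h s.
  apply: le_trans ad _; rewrite dir_derivE; apply: ge_inf; first exact: has_lbound_dquot.
  by exists s => //=; rewrite in_itv /= s0.
by rewrite /dquot ler_pdivlMr //; lra.
Qed.

Lemma dir_deriv_lt_ray x h a : dir_deriv phi x h < a ->
  exists2 t0, 0 < t0 & forall s, 0 < s -> s <= t0 -> phi (x + s *: h) < phi x + a * s.
Proof.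
rewrite dir_derivE => /inf_lt[].
  by exists (dquot x h 1), 1 => //=; rewrite in_itv /= ltr01.
move=> _ [t0 /= t00 <-] dt0; rewrite in_itv /= andbT in t00.
exists t0 => // s s0 st0; have := le_lt_trans (dquot_le x h s0 st0) dt0.
by rewrite /dquot ltr_pdivrMr //; lra.
Qed.

Lemma convex_segment_le x0 e r B tau : 0 < r -> phi x0 <= B ->
  phi (x0 + r *: e) <= B -> phi (x0 - r *: e) <= B -> `|tau| <= r ->
  phi (x0 + tau *: e) <= B.
Proof.
move=> r0 h0 hp hm tau_r.
have l01 : 0 <= `|tau| / r <= 1.
  by apply/andP; split; [rewrite divr_ge0 // ltW | rewrite ler_pdivrMr // mul1r].
have [tau0|tau0] := leP 0 tau.
  have -> : x0 + tau *: e = `|tau| / r *: (x0 + r *: e) + (1 - `|tau| / r) *: x0.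
    by apply/rowP => j; rewrite !mxE ger0_norm //; field; rewrite gt_eqF.
  exact: convex_sublevel.
have -> : x0 + tau *: e = `|tau| / r *: (x0 - r *: e) + (1 - `|tau| / r) *: x0.
  by apply/rowP => j; rewrite !mxE ltr0_norm //; field; rewrite gt_eqF.
exact: convex_sublevel.
Qed.

Lemma convex_l1ball_le x0 r B : 0 < r -> phi x0 <= B ->
  (forall k, phi (x0 + r *: 'e_k) <= B) -> (forall k, phi (x0 - r *: 'e_k) <= B) ->
  forall w, \sum_(k < m) `|w ord0 k| <= r -> phi (x0 + w) <= B.
Proof.
move=> r0 h0 hp hm.
(* Induction on the support: x0 + c_a e_a + W is a convex combination of a point of the
   segment x0 + [-r, r] e_a and a rescaled point x0 + (S / b) W of the same l1-ball. *)
suff seq_le (s : seq 'I_m) (c : 'I_m -> R) :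
    \sum_(k <- s) `|c k| <= r -> phi (x0 + \sum_(k <- s) c k *: 'e_k) <= B.
  by move=> w /seq_le; rewrite -row_sum_delta.
elim: s c => [|a s IH] c; first by move=> _; rewrite big_nil addr0.
rewrite !big_cons; set b := \sum_(k <- s) `|c k|; set W := \sum_(k <- s) c k *: 'e_k.
move=> hs.
have b0 : 0 <= b by exact: sumr_ge0.
have [ca0|ca0] := eqVneq (c a) 0.
  by rewrite ca0 scale0r add0r; apply: IH; rewrite ca0 normr0 add0r in hs.
have [b_eq0|b_neq0] := eqVneq b 0.
  have -> : W = 0.
    rewrite /W big_seq big1 // => k ks; move/eqP: b_eq0; rewrite psumr_eq0 // => /allP.
    by move=> /(_ k ks); rewrite normr_eq0 => /eqP ->; rewrite scale0r.
  rewrite b_eq0 addr0 in hs.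
  by rewrite addr0; apply: convex_segment_le (hp a) (hm a) _.
have ca_gt0 : 0 < `|c a| by rewrite normr_gt0.
have b_gt0 : 0 < b by rewrite lt_def b_neq0.
set S := `|c a| + b; have S_gt0 : 0 < S by rewrite addr_gt0.
have lambda01 : 0 <= `|c a| / S <= 1.
  by apply/andP; split; [rewrite divr_ge0 ?ltW | rewrite ler_pdivrMr // mul1r lerDl].
have p1_le : phi (x0 + (S / `|c a| * c a) *: 'e_a) <= B.
  apply: (convex_segment_le r0 h0 (hp a) (hm a)).
  by rewrite normrM normf_div !normr_id divfK ?gt_eqF // gtr0_norm.
have p2_le : phi (x0 + (S / b) *: W) <= B.
  rewrite /W scaler_sumr (eq_bigr (fun k => (S / b * c k) *: 'e_k)) => [|k _]; last first.
    by rewrite scalerA.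
  apply: IH; rewrite (eq_bigr (fun k => S / b * `|c k|)) => [|k _]; last first.
    by rewrite normrM ger0_norm // divr_ge0 // ltW.
  by rewrite -mulr_sumr -/b divfK ?gt_eqF.
have := convex_sublevel lambda01 p1_le p2_le.
suff -> : `|c a| / S *: (x0 + (S / `|c a| * c a) *: 'e_a)
    + (1 - `|c a| / S) *: (x0 + S / b *: W) = x0 + (c a *: 'e_a + W) by [].
by apply/rowP => j; rewrite !mxE /S; field; rewrite !gt_eqF.
Qed.

Lemma convex_locally_bounded x0 : exists B, forall w, `|w| <= 1 -> phi (x0 + w) <= B.
Proof.
set r : R := m.+1%:R.
set B : R := `|phi x0| + \sum_(k < m) (`|phi (x0 + r *: 'e_k)| + `|phi (x0 - r *: 'e_k)|).
have vertex_le k : `|phi (x0 + r *: 'e_k)| + `|phi (x0 - r *: 'e_k)| <= B - `|phi x0|.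
  rewrite /B addrAC subrr add0r (bigD1 k) //= lerDl.
  by apply: sumr_ge0 => i _; rewrite addr_ge0.
exists B => w w1; apply: (@convex_l1ball_le _ r) => [||k|k|].
- by rewrite ltr0Sn.
- apply: le_trans (ler_norm _) _; rewrite /B lerDl.
  by apply: sumr_ge0 => k _; rewrite addr_ge0.
- apply: le_trans (ler_norm _) _; have := vertex_le k.
  by have := normr_ge0 (phi x0); have := normr_ge0 (phi (x0 - r *: 'e_k)); lra.
- apply: le_trans (ler_norm _) _; have := vertex_le k.
  by have := normr_ge0 (phi x0); have := normr_ge0 (phi (x0 + r *: 'e_k)); lra.
- apply: le_trans (l1_le_mxnorm w) _; rewrite /r -[m.+1]addn1 natrD.
  have := ler_wpM2l (ler0n _ m) w1; rewrite mulr1; lra.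
Qed.

Lemma convex_lipschitz_at x0 B : (forall w, `|w| <= 1 -> phi (x0 + w) <= B) ->
  forall x, `|x - x0| <= 1 -> `|phi x - phi x0| <= (B - phi x0) * `|x - x0|.
Proof.
move=> hB x hx; have [->|xx0] := eqVneq x x0; first by rewrite !subrr !normr0 mulr0.
set t := `|x - x0|; have t0 : 0 < t by rewrite normr_gt0 subr_eq0.
set w := t^-1 *: (x - x0).
have w1 : `|w| = 1 by rewrite normrZ normfV normr_id mulVf ?gt_eqF.
have xE : x = x0 + t *: w by rewrite scalerA mulfV ?gt_eqF // scale1r addrC subrK.
have t1 : t <= 1 := hx; clearbody t w; subst x.
have ray_le v : `|v| <= 1 -> phi (x0 + t *: v) - phi x0 <= t * (B - phi x0).
  move=> v1; have := convex_ray x0 v t0 t1; rewrite divr1 scale1r.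
  by have := ler_wpM2l (ltW t0) (hB v v1); lra.
have mid : phi x0 <= 2^-1 * phi (x0 + t *: w) + 2^-1 * phi (x0 + t *: - w).
  have half01 : 0 <= (2 : R)^-1 <= 1.
    by apply/andP; split; [rewrite invr_ge0 | rewrite invf_le1 ?ler1n].
  have half : 1 - 2^-1 = (2 : R)^-1 by field.
  have := phi_cvx (x0 + t *: w) (x0 + t *: - w) half01; rewrite half.
  suff -> : 2^-1 *: (x0 + t *: w) + 2^-1 *: (x0 + t *: - w) = x0 by [].
  by apply/rowP => i; rewrite !mxE; field.
have := ray_le w (ltac:(by rewrite w1)); have := ray_le (- w) (ltac:(by rewrite normrN w1)).
by rewrite ler_norml mulrC; lra.
Qed.

Lemma has_lbound_dir_deriv x :
  has_lbound [set dir_deriv phi x h | h in [set h | enorm h = 1]].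
Proof.
have [B hB] := convex_locally_bounded x.
exists (phi x - B) => _ [h /= h1 <-]; apply: le_trans (dir_deriv_ge x h).
by rewrite lerD2l lerN2 hB // normrN -h1 mxnorm_le_enorm.
Qed.

Lemma min_dir_deriv_le x h : enorm h = 1 -> min_dir_deriv phi x <= dir_deriv phi x h.
Proof. by move=> h1; apply: (ge_inf (has_lbound_dir_deriv x)); exists h. Qed.

Lemma min_dir_deriv_lt x a : (0 < m)%N -> min_dir_deriv phi x < a ->
  exists2 h, enorm h = 1 & dir_deriv phi x h < a.
Proof.
move=> m0 /inf_lt[]; last by move=> _ [h h1 <-]; exists h.
by exists (dir_deriv phi x 'e_(Ordinal m0)), 'e_(Ordinal m0); rewrite //= enorm_delta.
Qed.

Lemma min_dir_deriv_ge0_le x y : 0 <= min_dir_deriv phi x -> phi x <= phi y.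
Proof.
move=> d0; have [->//|] := eqVneq y x; rewrite -subr_eq0 => /enorm_normalize[t0 h1 yE].
have := dir_deriv_ge_ray (le_trans d0 (min_dir_deriv_le x h1)) t0.
by rewrite -yE mul0r addr0 addrC subrK.
Qed.

End ConvexFun.

Lemma continuous_compact_bounded (R : realType) (I : topologicalType) (g : I -> R) :
  compact [set: I] -> continuous g -> exists K, forall i, `|g i| <= K.
Proof.
move=> cI cg; have /compact_bounded[M [_ HM]] : compact (g @` [set: I]).
  by apply: continuous_compact => //; exact: continuous_subspaceT.
by exists (M + 1) => i; apply: HM; [rewrite ltrDl | exists i].
Qed.

Lemma continuous_section (R : realType) (m : nat) (I : topologicalType)
    (G : I -> 'rV[R]_m -> R) :
  continuous (fun p : I * 'rV[R]_m => G p.1 p.2) -> forall x, continuous (G ^~ x).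
Proof.
move=> cG x i; have pair_cvg : (fun j : I => (j, x)) @ i --> (i, x).
  exact: (@cvg_pair _ _ _ _ (nbhs i) (nbhs x) _ _ _ id (fun=> x) cvg_id (cvg_cst x)).
exact: cvg_comp pair_cvg (cG (i, x)).
Qed.

Section ErrorBounds.
Variables (R : realType) (m : nat) (I : Type).
Local Notation V := 'rV[R]_m.
Implicit Types (G : I -> V -> R) (S : set V) (x y xb h : V) (s a c delta : R).

Lemma edist_le x y S : S y -> (Defs.edist x S <= (enorm (x - y))%:E)%E.
Proof. by move=> Sy; apply: ereal_inf_lbound; exists y. Qed.

Lemma edist_ray_halfspace S xb h s : enorm h = 1 ->
  (forall y, S y -> inner h (y - xb) <= 0) -> (s%:E <= Defs.edist (xb + s *: h) S)%E.
Proof.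
move=> h1 Sh; apply: le_ereal_inf_tmp => _ [y Sy <-]; rewrite lee_fin.
have := ler_norm_inner h (xb + s *: h - y); rewrite h1 mul1r => /(le_trans (ler_norm _)).
have -> : xb + s *: h - y = s *: h - (y - xb) by rewrite opprB addrCA addrA.
by rewrite innerBr innerZr inner_self h1 expr1n mulr1; have := Sh y Sy; lra.
Qed.

Lemma tau_min_le G xb c delta : 0 < c -> 0 < delta ->
  (forall x, enorm (x - xb) <= delta ->
     (Defs.edist x (solset G) <= (c * Num.max (fmax G x) 0)%:E)%E) ->
  (tau_min G xb <= c%:E)%E.
Proof.
by move=> c0 d0 bound; apply: ereal_inf_lbound; exists c => //; split => //; exists delta.
Qed.

Lemma tau_min_ge G xb a : 0 < a ->
  (forall delta, 0 < delta -> exists x s, [/\ enorm (x - xb) <= delta, 0 < s,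
     (s%:E <= Defs.edist x (solset G))%E & Num.max (fmax G x) 0 <= a * s]) ->
  (a^-1%:E <= tau_min G xb)%E.
Proof.
move=> a0 witness; apply: le_ereal_inf_tmp => _ [tau [tau0 [d [d0 bound]]] <-].
have [x [s [xd s0 sx gx]]] := witness d d0.
have := le_trans sx (bound x xd); rewrite lee_fin => s_le.
have one_le : 1 <= tau * a.
  rewrite -(ler_pM2r s0) mul1r -mulrA; apply: le_trans s_le _.
  by rewrite ler_wpM2l // ltW.
by rewrite lee_fin -[a^-1]mul1r ler_pdivrMr.
Qed.

Lemma edist_solset_sharp G xb kappa : 0 < kappa -> solset G xb ->
  (forall x, kappa * enorm (x - xb) <= fmax G x) ->
  forall x, (Defs.edist x (solset G) <= (kappa^-1 * Num.max (fmax G x) 0)%:E)%E.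
Proof.
move=> k0 Sxb grow x; apply: le_trans (edist_le _ Sxb) _; rewrite lee_fin.
rewrite -(ler_pM2l k0) mulrA mulfV ?gt_eqF // mul1r.
by apply: le_trans (grow x) _; rewrite le_max lexx.
Qed.

End ErrorBounds.

Section CompactFamily.
Variables (R : realType) (m : nat) (I : topologicalType).
Local Notation V := 'rV[R]_m.
Hypotheses (I_compact : compact [set: I]) (I_nonempty : [set: I] !=set0).
Variable G : I -> V -> R.
Hypothesis G_cont : forall x, continuous (G ^~ x).
Implicit Types (x y h : V) (s t B kappa : R).

Lemma has_sup_fmax x : has_sup [set G i x | i in [set: I]].
Proof.
have [i _] := I_nonempty; split; first by exists (G i x), i.
have [K HK] := continuous_compact_bounded I_compact (@G_cont x).
by exists K => _ [j _ <-]; apply: le_trans (HK j); exact: ler_norm.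
Qed.

Lemma le_fmax i x : G i x <= fmax G x.
Proof. by apply: (sup_upper_bound (has_sup_fmax x)); exists i. Qed.

Lemma fmax_le x B : (forall i, G i x <= B) -> fmax G x <= B.
Proof.
move=> GB; apply: ge_sup; first by have [i _] := I_nonempty; exists (G i x), i.
by move=> _ [j _ <-]; exact: GB.
Qed.

Lemma solset_fmax x : fmax G x <= 0 -> solset G x.
Proof. by move=> g0 i; apply: le_trans g0; exact: le_fmax. Qed.

Lemma inactive_lt i x : ~ active G x i -> G i x < fmax G x.
Proof. by move=> na; rewrite lt_neqAle le_fmax andbT; apply/eqP. Qed.

Hypothesis G_cvx : forall i, convex_fun (G i).

Lemma convex_fmax : convex_fun (fmax G).
Proof.
move=> x y t /[dup] t01 /andP[t0 t1]; apply: fmax_le => i.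
apply: le_trans (G_cvx i x y t01) _.
by apply: lerD; apply: ler_wpM2l; rewrite ?subr_ge0 ?le_fmax.
Qed.

Lemma uniform_ray_bound x h kappa : (forall j, G j x <= 0) ->
  (forall i, exists2 s, 0 < s & G i (x + s *: h) < kappa * s) ->
  exists2 s, 0 < s & forall j, G j (x + s *: h) <= kappa * s.
Proof.
move=> Gx0 ray_lt.
have : \forall s \near (0 : R)^'+, [set: I] `<=` (fun j => G j (x + s *: h) < kappa * s).
  apply: (proj1 (compact_near_coveringP [set: I]) I_compact R 0^'+
    (fun s j => G j (x + s *: h) < kappa * s)) => i _.
  have [si si0 Gsi] := ray_lt i.
  have e0 : 0 < kappa * si - G i (x + si *: h) by rewrite subr_gt0.
  exists ([set j | `|G i (x + si *: h) - G j (x + si *: h)| < kappa * si - G i (x + si *: h)],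
          [set s | 0 < s < si]) => /=.
    split; first by move/cvgrPdist_lt : (@G_cont (x + si *: h) i); apply.
    near=> s; apply/andP; split; near: s; [exact: nbhs_right_gt | exact: nbhs_right_lt].
  move=> [j s] /= [Gj /andP[s0 ssi]].
  have Gjsi : G j (x + si *: h) < kappa * si by move: Gj; rewrite ltr_norml; lra.
  apply: le_lt_trans (convex_ray_nonpos (G_cvx j) h (Gx0 j) s0 (ltW ssi)) _.
  rewrite (_ : kappa * s = s / si * (kappa * si)); last by field; rewrite gt_eqF.
  by rewrite ltr_pM2l // divr_gt0.
move=> near_lt; near (0 : R)^'+ => s.
exists s; first by near: s; exact: nbhs_right_gt.
by move=> j; apply: ltW; exact: (near near_lt s).
Unshelve. all: by end_near.
Qed.

Lemma equilipschitz_at x0 : exists2 L, 0 <= L &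
  forall j x, `|x - x0| <= 1 -> `|G j x - G j x0| <= L * `|x - x0|.
Proof.
have [B hB] := convex_locally_bounded convex_fmax x0.
have [K hK] := continuous_compact_bounded I_compact (@G_cont x0).
exists (B + K) => [|j x hx].
  have [i _] := I_nonempty; have := hB 0; rewrite normr0 addr0 => /(_ ler01).
  by have := le_fmax i x0; have := hK i; rewrite ler_norml; lra.
apply: le_trans (convex_lipschitz_at (G_cvx j) _ hx) _.
  by move=> w /hB; apply: le_trans; exact: le_fmax.
by apply: ler_wpM2r => //; rewrite lerD2l; have := hK j; rewrite ler_norml; lra.
Qed.

Lemma jointly_continuous_family : continuous (fun p : I * V => G p.1 p.2).
Proof.
move=> [i0 x0]; apply/cvgrPdist_lt => e e0 /=.
have [L L0 hL] := equilipschitz_at x0.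
have L1 : 0 < L + 1 by rewrite ltr_wpDl.
set d := Num.min 1 (e / 2 / (L + 1)).
have d0 : 0 < d by rewrite lt_min ltr01 !divr_gt0.
exists ([set j | `|G i0 x0 - G j x0| < e / 2], [set x | `|x0 - x| < d]) => /=.
  split; first by move/cvgrPdist_lt : (@G_cont x0 i0); apply; rewrite divr_gt0.
  by move/cvgrPdist_lt : (@cvg_id _ (nbhs x0)); apply.
move=> [j x] /= [Gj /ltW]; rewrite distrC => dx.
have dx1 : `|x - x0| <= 1 by apply: le_trans dx _; rewrite ge_min lexx.
have Ld : L * `|x - x0| <= e / 2.
  apply: le_trans (_ : (L + 1) * d <= _).
    by apply: ler_pM; rewrite ?normr_ge0 ?lerDl.
  by rewrite -ler_pdivlMl // mulrC ge_min lexx orbT.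
have := ler_distD (G j x0) (G i0 x0) (G j x); have := hL j x dx1.
by rewrite [`|G j x - _|]distrC; lra.
Qed.

Lemma edist_solset_slater y q : 0 < q -> (forall j, G j y <= - q) ->
  forall x, (Defs.edist x (solset G) <= (enorm (x - y) / q * Num.max (fmax G x) 0)%:E)%E.
Proof.
move=> q0 Gy x; have [gx0|gx_gt0] := leP (fmax G x) 0.
  by apply: le_trans (edist_le _ (solset_fmax gx0)) _; rewrite subrr enorm0 mulr0.
set gx := fmax G x in gx_gt0 *; have gq : 0 < gx + q by rewrite addr_gt0.
set t := q / (gx + q).
have t0 : 0 <= t by rewrite divr_ge0 ?ltW.
have t1 : 0 <= 1 - t by rewrite subr_ge0 ler_pdivrMr // mul1r lerDr ltW.
have tq : t * gx = (1 - t) * q by rewrite /t; field; rewrite gt_eqF.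
have Sz : solset G (t *: x + (1 - t) *: y).
  move=> j; apply: le_trans (G_cvx j x y (ltac:(lra) : 0 <= t <= 1)) _.
  have := ler_wpM2l t0 (le_fmax j x); have := ler_wpM2l t1 (Gy j).
  by rewrite -/gx tq mulrN; lra.
apply: le_trans (edist_le _ Sz) _; rewrite lee_fin.
have -> : x - (t *: x + (1 - t) *: y) = (1 - t) *: (x - y).
  by apply/rowP => k; rewrite !mxE; ring.
rewrite enormZ ger0_norm //.
have -> : 1 - t = gx / (gx + q) by rewrite /t; field; rewrite gt_eqF.
have : gx / (gx + q) <= gx / q by rewrite ler_pM2l // lef_pV2 ?posrE // lerDr ltW.
move=> /(ler_wpM2r (enorm_ge0 (x - y))).
by have -> : gx / q * enorm (x - y) = enorm (x - y) / q * gx by ring.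
Qed.

End CompactFamily.

Lemma limf_esup_le_near (T : choiceType) (X : filteredType T) (R : realType)
    (F : set_system X) (f : X -> R) (a b : R) :
  Filter F -> (limf_esup (fun x : X => (f x)%:E) F <= a%:E)%E -> a < b ->
  \forall x \near F, f x < b.
Proof.
move=> FF fa ab; have : (limf_esup (fun x : X => (f x)%:E) F < b%:E)%E.
  by apply: le_lt_trans fa _; rewrite lte_fin.
rewrite limf_esupE => /ereal_inf_lt[_ [A FA <-]] supA; apply: filterS FA => x Ax.
by rewrite -lte_fin; apply: le_lt_trans supA; apply: ereal_sup_ubound; exists x.
Qed.

Lemma limf_esup_le_ub (T : choiceType) (X : filteredType T) (R : realType)
    (F : set_system X) (f : X -> \bar R) (a : \bar R) :
  Filter F -> (forall x, (f x <= a)%E) -> (limf_esup f F <= a)%E.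
Proof.
move=> FF fa; rewrite limf_esupE; apply: le_trans (ereal_inf_lbound _) _.
  by exists setT => //; exact: filterT.
by apply: ge_ereal_sup => _ [x _ <-].
Qed.

Section Rays.
Variables (R : realType) (m : nat).
Local Notation V := 'rV[R]_m.

Lemma near_dnbhs_ray (xb h : V) (P : V -> Prop) : h != 0 ->
  (\forall x \near xb^', P x) -> \forall s \near (0 : R)^'+, P (xb + s *: h).
Proof.
move=> h0; rewrite near_withinE => /nbhs_normP[e /= e0 Pe].
have h_gt0 : 0 < `|h| by rewrite normr_gt0.
near=> s; have s0 : 0 < s by near: s; exact: nbhs_right_gt.
apply: Pe => /=; last by rewrite -subr_eq0 addrAC subrr add0r scaler_eq0 negb_or gt_eqF.
rewrite opprD addrA subrr add0r normrN normrZ gtr0_norm // -ltr_pdivlMr //.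
by near: s; apply: nbhs_right_lt; rewrite divr_gt0.
Unshelve. all: by end_near.
Qed.

Lemma limsup_ray_lt (phi psi : V -> R) xb h eps eps' : enorm h = 1 -> eps < eps' ->
  (limf_esup (fun x => (`|phi x - psi x - (phi xb - psi xb)| / enorm (x - xb))%:E)
     xb^' <= eps%:E)%E ->
  \forall s \near (0 : R)^'+,
    `|phi (xb + s *: h) - psi (xb + s *: h) - (phi xb - psi xb)| < eps' * s.
Proof.
move=> h1 ee' /limf_esup_le_near/(_ ee') near_lt.
have h0 : h != 0.
  by apply/eqP => h0; move: h1; rewrite h0 enorm0 => /esym/eqP; rewrite oner_eq0.
have := near_dnbhs_ray h0 near_lt; apply: filter_app.
near=> s => /=; have s0 : 0 < s by near: s; exact: nbhs_right_gt.
have -> : xb + s *: h - xb = s *: h by rewrite addrC addKr.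
by rewrite enormZ (gtr0_norm s0) h1 mulr1 ltr_pdivrMr // mulrC.
Unshelve. all: by end_near.
Qed.

End Rays.

Section Perturbation.
Variables (R : realType) (m : nat) (I : topologicalType).
Local Notation V := 'rV[R]_m.
Hypotheses (I_compact : compact [set: I]) (I_nonempty : [set: I] !=set0).
Variables (F G : I -> V -> R) (xb : V).
Hypotheses (F_cvx : forall i, convex_fun (F i)) (G_cvx : forall i, convex_fun (G i)).
Hypotheses (F_cont : forall x, continuous (F ^~ x)) (G_cont : forall x, continuous (G ^~ x)).
Hypotheses (F_xb : fmax F xb = 0) (G_xb : fmax G xb = 0).
Implicit Types (x h : V) (s gamma mu eps : R).

Let F_le_fmax := le_fmax I_compact I_nonempty F_cont.
Let G_le_fmax := le_fmax I_compact I_nonempty G_cont.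
Let F_xb_le i : F i xb <= 0. Proof. by rewrite -F_xb F_le_fmax. Qed.
Let G_xb_le i : G i xb <= 0. Proof. by rewrite -G_xb G_le_fmax. Qed.

Definition first_order_close i eps := (limf_esup (fun x =>
  (`|F i x - G i x - (F i xb - G i xb)| / enorm (x - xb))%:E) xb^' <= eps%:E)%E.

Lemma perturbed_descent h s0 gamma : enorm h = 1 -> 0 < s0 -> 0 < gamma ->
  (forall s, 0 < s -> s <= s0 -> fmax F (xb + s *: h) <= - gamma * s) ->
  active G xb `<=` active F xb ->
  (forall i, active F xb i -> active G xb i -> first_order_close i (gamma / 4)) ->
  exists2 s, 0 < s & forall j, G j (xb + s *: h) <= - (gamma / 4) * s.
Proof.
move=> h1 s00 g0 descent GF close.
apply: (uniform_ray_bound I_compact G_cont G_cvx G_xb_le) => i.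
have [aG|/(inactive_lt I_compact I_nonempty G_cont)] := pselect (active G xb i); last first.
  by rewrite G_xb => /(convex_ray_neg (G_cvx i)); apply.
have aF := GF i aG; have Fi0 : F i xb = 0 by rewrite aF.
have Gi0 : G i xb = 0 by rewrite aG.
have near_lt := limsup_ray_lt h1 (ltac:(lra) : gamma / 4 < gamma / 2) (close i aF aG).
near (0 : R)^'+ => s.
have s_gt0 : 0 < s by near: s; exact: nbhs_right_gt.
have ss0 : s <= s0 by near: s; exact: nbhs_right_le.
have gap : `|F i (xb + s *: h) - G i (xb + s *: h) - (F i xb - G i xb)| < gamma / 2 * s.
  by near: s.
exists s => //; move: gap; rewrite Fi0 Gi0 subrr subr0 ltr_norml.
have := le_trans (F_le_fmax i _) (descent s s_gt0 ss0); nra.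
Unshelve. all: by end_near.
Qed.

Lemma active_ray_growth h mu : 0 < mu ->
  (forall s, 0 < s -> mu * s <= fmax F (xb + s *: h)) ->
  exists2 i, active F xb i & forall s, 0 < s -> mu / 2 * s <= F i (xb + s *: h).
Proof.
move=> mu0 growth; apply: contrapT => no_i.
have [s s0 Fs] : exists2 s, 0 < s & forall j, F j (xb + s *: h) <= mu / 2 * s.
  apply: (uniform_ray_bound I_compact F_cont F_cvx F_xb_le) => i.
  have [aF|/(inactive_lt I_compact I_nonempty F_cont)] := pselect (active F xb i); last first.
    by rewrite F_xb => /(convex_ray_neg (F_cvx i)); apply.
  apply: contrapT => no_s; apply: no_i; exists i => // s s0.
  by rewrite leNgt; apply/negP => lt; apply: no_s; exists s.
have : 0 < mu * s by rewrite mulr_gt0.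
by have := growth s s0; have := fmax_le I_nonempty Fs; lra.
Qed.

Lemma perturbed_growth mu : 0 < mu ->
  (forall h s, enorm h = 1 -> 0 < s -> mu * s <= fmax F (xb + s *: h)) ->
  active F xb `<=` active G xb ->
  (forall i, active F xb i -> active G xb i -> first_order_close i (mu / 8)) ->
  forall x, mu / 4 * enorm (x - xb) <= fmax G x.
Proof.
move=> mu0 growth FG close x.
have [->|] := eqVneq x xb; first by rewrite subrr enorm0 mulr0 G_xb.
rewrite -subr_eq0 => /enorm_normalize[s_gt0 h1 xE].
move: s_gt0 h1 xE; set s := enorm (x - xb); set h := s^-1 *: (x - xb).
move=> s_gt0 h1 xE; have {xE} -> : x = xb + s *: h by rewrite -xE addrC subrK.
clearbody s h.
have [i aF Fi_grow] := active_ray_growth mu0 (fun s => growth h s h1).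
have aG := FG i aF; have Fi0 : F i xb = 0 by rewrite aF.
have Gi0 : G i xb = 0 by rewrite aG.
have near_lt := limsup_ray_lt h1 (ltac:(lra) : mu / 8 < mu / 4) (close i aF aG).
near (0 : R)^'+ => s1.
have s1_gt0 : 0 < s1 by near: s1; exact: nbhs_right_gt.
have s1_lt : s1 < s by near: s1; exact: nbhs_right_lt.
have gap : `|F i (xb + s1 *: h) - G i (xb + s1 *: h) - (F i xb - G i xb)| < mu / 4 * s1.
  by near: s1.
have Gs1 : mu / 4 * s1 <= G i (xb + s1 *: h).
  move: gap; rewrite Fi0 Gi0 subrr subr0 ltr_norml; have := Fi_grow s1 s1_gt0; lra.
have := convex_ray_nonpos (G_cvx i) h (G_xb_le i) s1_gt0 (ltW s1_lt).
move=> /(le_trans Gs1) ray; apply: le_trans (G_le_fmax i _).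
have ratio_gt0 : 0 < s1 / s by rewrite divr_gt0.
rewrite -(ler_pM2l ratio_gt0).
by have -> : s1 / s * (mu / 4 * s) = mu / 4 * s1 by field; rewrite gt_eqF.
Unshelve. all: by end_near.
Qed.

End Perturbation.

Lemma continuous_tilt (R : realType) (m : nat) (I : topologicalType)
    (u xb : 'rV[R]_m) (eps : R) :
  continuous (fun p : I * 'rV[R]_m => eps * inner u (p.2 - xb)).
Proof.
move=> [i0 x0]; apply/cvgrPdist_lt => e e0.
set L := `|eps| * \sum_(j < m) `|u ord0 j| + 1.
have L0 : 0 < L by rewrite ltr_pwDr // mulr_ge0 // sumr_ge0.
exists ([set: I], [set x | `|x0 - x| < e / L]) => /=.
  split; first exact: filterT.
  by move/cvgrPdist_lt : (@cvg_id _ (nbhs x0)); apply; rewrite divr_gt0.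
move=> [j x] /= [_ x0x]; rewrite -mulrBr -innerBr opprB addrA subrK normrM.
apply: le_lt_trans (ler_wpM2l (normr_ge0 eps) (ler_inner_mxnorm u (x0 - x))) _.
rewrite ltr_pdivlMr // mulrC in x0x; rewrite mulrA; apply: le_lt_trans x0x.
by rewrite ler_wpM2r // lerDl.
Qed.

Definition perturbed_error_bound (R : realType) (m : nat) (I : topologicalType)
    (F : I -> 'rV[R]_m -> R) (xb : 'rV[R]_m) (c eps : R) :=
  forall G : I -> 'rV[R]_m -> R,
    continuous (fun p : I * 'rV[R]_m => G p.1 p.2) ->
    (forall i, convex_fun (G i)) ->
    fmax G xb = 0 ->
    (min_dir_deriv (fmax F) xb < 0 -> active G xb `<=` active F xb) ->
    (0 < min_dir_deriv (fmax F) xb -> active F xb `<=` active G xb) ->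
    (forall i, active F xb i -> active G xb i -> first_order_close F G xb i eps) ->
    (tau_min G xb <= c%:E)%E.

Definition tilted_error_bound (R : realType) (m : nat) (I : topologicalType)
    (F : I -> 'rV[R]_m -> R) (xb : 'rV[R]_m) (c eps : R) :=
  forall u : 'rV[R]_m, enorm u <= 1 ->
    (tau_min (fun i x => (F i x + eps * inner u (x - xb))%R) xb <= c%:E)%E.

Section ErrorBoundCharacterization.
Variables (R : realType) (m : nat) (I : topologicalType).
Local Notation V := 'rV[R]_m.
Hypotheses (m_gt0 : (0 < m)%N) (I_compact : compact [set: I]) (I_nonempty : [set: I] !=set0).
Variables (F : I -> V -> R) (xb : V).
Hypotheses (F_cvx : forall i, convex_fun (F i)) (F_cont : forall x, continuous (F ^~ x)).
Hypothesis F_xb : fmax F xb = 0.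
Local Notation f := (fmax F).

Let f_cvx : convex_fun f := convex_fmax I_compact I_nonempty F_cont F_cvx.

Lemma perturbed_error_bound_neg : min_dir_deriv f xb < 0 ->
  exists c eps : R, 0 < c /\ 0 < eps /\ perturbed_error_bound F xb c eps.
Proof.
move=> neg; have [h h1 dh] := min_dir_deriv_lt m_gt0 neg.
set gamma := - dir_deriv f xb h / 2.
have g0 : 0 < gamma by rewrite divr_gt0 // oppr_gt0.
have dh' : dir_deriv f xb h < - gamma by rewrite /gamma; lra.
have [s0 s00 descent] := dir_deriv_lt_ray f_cvx dh'.
have {}descent s : 0 < s -> s <= s0 -> f (xb + s *: h) <= - gamma * s.
  by move=> s_gt0 ss0; have := descent s s_gt0 ss0; rewrite F_xb add0r => /ltW.
exists (8 / gamma), (gamma / 4); split; [exact: divr_gt0 | split; [exact: divr_gt0 |]].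
move=> G G_jcont G_cvx G_xb GF _ close.
have G_cont := continuous_section G_jcont.
have [s s_gt0 Gs] := perturbed_descent I_compact I_nonempty G_cvx F_cont G_cont F_xb G_xb
  h1 s00 g0 descent (GF neg) close.
(* For |x - xb| <= s the Slater point y = xb + s h with margin q = gamma s / 4 satisfies
   |x - y| <= 2 s, whence the constant 2 s / q = 8 / gamma. *)
apply: (tau_min_le (delta := s)) => // [|x xs]; first by rewrite divr_gt0.
have q0 : 0 < gamma / 4 * s by rewrite mulr_gt0 // divr_gt0.
have Gy j : G j (xb + s *: h) <= - (gamma / 4 * s) by rewrite -mulNr Gs.
apply: le_trans (edist_solset_slater I_compact I_nonempty G_cont G_cvx q0 Gy x) _.
rewrite lee_fin ler_wpM2r ?le_max ?lexx ?orbT // ler_pdivrMr //.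
have -> : 8 / gamma * (gamma / 4 * s) = 2 * s by field; rewrite gt_eqF.
rewrite opprD addrA -scaleNr; apply: le_trans (ler_enormD _ _) _.
by rewrite enormZ normrN gtr0_norm // h1 mulr1; lra.
Qed.

Lemma perturbed_error_bound_pos : 0 < min_dir_deriv f xb ->
  exists c eps : R, 0 < c /\ 0 < eps /\ perturbed_error_bound F xb c eps.
Proof.
move=> pos; set mu := min_dir_deriv f xb in pos *.
have growth h s : enorm h = 1 -> 0 < s -> mu * s <= f (xb + s *: h).
  move=> h1 s0; have := dir_deriv_ge_ray f_cvx (min_dir_deriv_le f_cvx xb h1) s0.
  by rewrite F_xb add0r.
exists (4 / mu), (mu / 8); split; [exact: divr_gt0 | split; [exact: divr_gt0 |]].
move=> G G_jcont G_cvx G_xb _ FG close.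
have G_cont := continuous_section G_jcont.
have mu4 : 0 < mu / 4 by rewrite divr_gt0.
have Sxb : solset G xb by apply: (solset_fmax I_compact I_nonempty G_cont); rewrite G_xb.
apply: (tau_min_le (delta := 1)) => // [|x _]; first by rewrite divr_gt0.
have := edist_solset_sharp mu4 Sxb (perturbed_growth I_compact I_nonempty F_cvx G_cvx
  F_cont G_cont F_xb G_xb pos growth (FG pos) close) x.
by rewrite invf_div.
Qed.

Lemma tilted_of_perturbed c eps : 0 < eps ->
  perturbed_error_bound F xb c eps -> tilted_error_bound F xb c eps.
Proof.
move=> eps0 bound u u1; set G := fun i x => (F i x + eps * inner u (x - xb))%R.
have G_xb i : G i xb = F i xb by rewrite /G subrr inner0r mulr0 addr0.
have fmax_G : fmax G xb = f xb by rewrite /fmax; congr sup; apply: eq_imagel => i _.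
have active_G : active G xb = active F xb.
  by apply/seteqP; split => i; rewrite /active /= G_xb fmax_G.
apply: bound => [p|||_|_|i _ _]; rewrite ?fmax_G ?active_G //.
- apply: cvgD; first exact: (jointly_continuous_family I_compact I_nonempty F_cont F_cvx).
  exact: continuous_tilt.
- move=> i x y t t01; have := F_cvx i x y t01; rewrite /G.
  have -> : inner u (t *: x + (1 - t) *: y - xb)
      = t * inner u (x - xb) + (1 - t) * inner u (y - xb).
    by rewrite !innerBr !innerDr !innerZr; ring.
  lra.
apply: limf_esup_le_ub => x; rewrite lee_fin G_xb subrr subr0 /G.
rewrite opprD addrA subrr add0r normrN.
have [->|x_ne] := eqVneq (enorm (x - xb)) 0; first by rewrite invr0 mulr0 ltW.
have x_gt0 : 0 < enorm (x - xb) by rewrite lt_def x_ne enorm_ge0.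
rewrite ler_pdivrMr // normrM gtr0_norm //; apply: ler_wpM2l; first exact: ltW.
apply: le_trans (ler_norm_inner _ _) _.
by rewrite -[leRHS]mul1r; apply: ler_wpM2r u1; exact: enorm_ge0.
Qed.

Lemma min_dir_deriv_neq0 c eps : 0 < c -> 0 < eps ->
  tilted_error_bound F xb c eps -> min_dir_deriv f xb <> 0.
Proof.
move=> c0 eps0 bound mu0.
have f_ge0 y : 0 <= f y by rewrite -F_xb; apply: (min_dir_deriv_ge0_le f_cvx); rewrite mu0.
set eta := (4 * c)^-1; have eta0 : 0 < eta by rewrite invr_gt0 mulr_gt0.
have [h h1 dh] := min_dir_deriv_lt m_gt0 (ltac:(by rewrite mu0) : min_dir_deriv f xb < eta).
have [s0 s00 small] := dir_deriv_lt_ray f_cvx dh.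
set t := Num.min 1 (eta / eps); have t0 : 0 < t by rewrite lt_min ltr01 divr_gt0.
have eps_t : eps * t <= eta by rewrite mulrC -ler_pdivlMr // ge_min lexx orbT.
have u1 : enorm (t *: h) <= 1 by rewrite enormZ gtr0_norm // h1 mulr1 ge_min lexx.
have := bound _ u1; set G := fun i x => _.
have solset_half y : solset G y -> inner h (y - xb) <= 0.
  move=> Gy; have : f y <= - (eps * t * inner h (y - xb)).
    apply: (fmax_le I_nonempty) => i; have := Gy i.
    by rewrite /G innerZl -mulrA; lra.
  have := f_ge0 y; have : 0 < eps * t by rewrite mulr_gt0.
  by move=> et; rewrite -(pmulr_rle0 _ et); lra.
suff : ((2 * c)%:E <= tau_min G xb)%E by move=> /le_trans hle /hle; rewrite lee_fin; lra.
have -> : 2 * c = (2 * eta)^-1 by rewrite /eta; field; rewrite gt_eqF.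
apply: tau_min_ge; first by rewrite mulr_gt0.
move=> delta delta0; set s := Num.min delta s0.
have s_gt0 : 0 < s by rewrite lt_min delta0 s00.
exists (xb + s *: h), s; split => //.
- by rewrite addrC addKr enormZ gtr0_norm // h1 mulr1 ge_min lexx.
- exact: edist_ray_halfspace.
rewrite ge_max; apply/andP; split; last by apply/ltW; rewrite !mulr_gt0.
apply: (fmax_le I_nonempty) => i; rewrite /G.
have -> : xb + s *: h - xb = s *: h by rewrite addrC addKr.
rewrite innerZl innerZr inner_self h1.
have := le_fmax I_compact I_nonempty F_cont i (xb + s *: h).
have := small s s_gt0 (ltac:(by rewrite ge_min lexx orbT)); rewrite F_xb add0r.
have := ler_wpM2r (ltW s_gt0) eps_t; rewrite expr1n mulr1; lra.
Qed.

End ErrorBoundCharacterization.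

Theorem theorem12 (R : realType) (m : nat) (I : topologicalType)
  (F : I -> 'rV[R]_m -> R) (xb : 'rV[R]_m) :
  (0 < m)%N ->
  compact [set: I] -> hausdorff_space I -> [set: I] !=set0 ->
  (forall i, convex_fun (F i)) ->
  (forall x, continuous (fun i => F i x)) ->
  fmax F xb = 0 ->
  [<-> (* (i) *)
       min_dir_deriv (fmax F) xb <> 0;
       (* (ii) *)
       exists c eps : R, 0 < c /\ 0 < eps /\
         forall G : I -> 'rV[R]_m -> R,
           continuous (fun p : I * 'rV[R]_m => G p.1 p.2) ->
           (forall i, convex_fun (G i)) ->
           fmax G xb = 0 ->
           (min_dir_deriv (fmax F) xb < 0 -> active G xb `<=` active F xb) ->
           (0 < min_dir_deriv (fmax F) xb -> active F xb `<=` active G xb) ->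
           (forall i, active F xb i -> active G xb i ->
              (limf_esup (fun x : 'rV[R]_m =>
                  (`|F i x - G i x - (F i xb - G i xb)| / enorm (x - xb))%:E)
                 xb^' <= eps%:E)%E) ->
           (tau_min G xb <= c%:E)%E;
       (* (iii) *)
       exists c eps : R, 0 < c /\ 0 < eps /\
         forall u : 'rV[R]_m, enorm u <= 1 ->
           (tau_min (fun i x => (F i x + eps * inner u (x - xb))%R) xb <= c%:E)%E].
Proof.
move=> m_gt0 I_compact _ I_nonempty F_cvx F_cont F_xb.
split; [|split].
- move=> /eqP; rewrite neq_lt => /orP[neg|pos].
    exact: perturbed_error_bound_neg.
  exact: perturbed_error_bound_pos.
- move=> [c [eps [c0 [eps0 bound]]]]; exists c, eps; do 2!split => //.
  exact: tilted_of_perturbed.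
- move=> [c [eps [c0 [eps0 bound]]]].
  exact: min_dir_deriv_neq0 bound.
Qed.
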